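(* Let $A\in\mathbb{R}^{m\times n}$ be semi-monotone, let $A=P_1-R_1+S_1$ be a double proper weak regular splitting and $A=P_2-R_2+S_2$ a double proper regular splitting of $A$. Suppose $N(S_2)=N(P_2)$, $R(S_2)=R(P_2)$, $1\notin\sigma(S_2P_1^{\dagger})$, $-1\notin\sigma(R_2P_1^{\dagger})$, $\widehat{A}^{\dagger}\geq 0$ and $\widehat{\mathcal{A}}^{\dagger}\geq 0$, where $\widehat{A}=(I-S_2P_1^{\dagger})A$ and $\widehat{\mathcal{A}}=(I+R_2P_1^{\dagger})A$. Let $\widehat{P}=\widehat{\mathcal{P}}=P_2$, $\widehat{R}=R_2-S_2P_1^{\dagger}R_1$ and $\widehat{\mathcal{R}}=R_2P_1^{\dagger}R_1-S_2$. If $\widehat{\mathcal{P}}^{\dagger}\widehat{\mathcal{R}}\geq\widehat{P}^{\dagger}\widehat{R}$ and $\widehat{\mathcal{P}}^{\dagger}\widehat{\mathcal{A}}\geq\widehat{P}^{\dagger}\widehat{A}$, then $\rho(\mathcal{W}_{12})\leq\rho(W_{12})<1$, where $$W_{12}=\begin{pmatrix} P_2^{\dagger}R_2-P_2^{\dagger}S_2P_1^{\dagger}R_1 & P_2^{\dagger}S_2P_1^{\dagger}S_1\\ I & 0\end{pmatrix},\qquad \mathcal{W}_{12}=\begin{pmatrix} P_2^{\dagger}R_2P_1^{\dagger}R_1-P_2^{\dagger}S_2 & -P_2^{\dagger}R_2P_1^{\dagger}S_1\\ I & 0\end{pmatrix}.$$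
   Context: For $M\in\mathbb{R}^{m\times n}$, $M^{\dagger}$ is its Moore–Penrose inverse, $R(M)$, $N(M)$ its range and null space; inequalities are entrywise; $\rho$ is the spectral radius, $\sigma$ the spectrum. $A$ is semi-monotone if $A^{\dagger}\geq0$. A double splitting $A=P-R+S$ is a double proper splitting if $R(P)=R(A)$ and $N(P)=N(A)$; it is double proper regular if moreover $P^{\dagger}\geq0$, $R\geq0$, $S\leq0$; double proper weak regular if moreover $P^{\dagger}\geq 0$, $P^{\dagger}R\geq 0$, $P^{\dagger}S\leq 0$. *)

From HB Require Import structures.
From mathcomp Require Import all_boot all_order all_algebra.
From mathcomp Require Import reals complex.
Set Implicit Arguments.
Unset Strict Implicit.
Unset Printing Implicit Defensive.
Import Order.TTheory GRing.Theory Num.Theory.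
Local Open Scope ring_scope.

Section Defs.
Variable R : realType.

Definition is_MP m n (M : 'M[R]_(m, n)) (X : 'M[R]_(n, m)) : Prop :=
  [/\ M *m X *m M = M, X *m M *m X = X,
      (M *m X)^T = M *m X & (X *m M)^T = X *m M].

Definition mx_nonneg m n (M : 'M[R]_(m, n)) : Prop := forall i j, 0 <= M i j.
Definition mx_nonpos m n (M : 'M[R]_(m, n)) : Prop := forall i j, M i j <= 0.
Definition mx_le m n (M N : 'M[R]_(m, n)) : Prop := forall i j, M i j <= N i j.

Definition in_range m n (M : 'M[R]_(m, n)) (y : 'cV[R]_m) : Prop :=
  exists x : 'cV[R]_n, y = M *m x.
Definition in_null m n (M : 'M[R]_(m, n)) (x : 'cV[R]_n) : Prop :=
  M *m x = 0.
Definition same_range m n (M N : 'M[R]_(m, n)) : Prop :=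
  forall y, in_range M y <-> in_range N y.
Definition same_null m n (M N : 'M[R]_(m, n)) : Prop :=
  forall x, in_null M x <-> in_null N x.

Definition cmx m n (M : 'M[R]_(m, n)) : 'M[R[i]]_(m, n) :=
  map_mx (fun x : R => (x%:C)%C) M.
Definition in_spectrum k (M : 'M[R]_k) (z : R[i]) : bool :=
  eigenvalue (cmx M) z.

Lemma char_poly_split k (M : 'M[R]_k) :
  exists rs : seq R[i],
    char_poly (cmx M) == \prod_(z <- rs) ('X - z%:P).
Proof.
have [rs Hrs] := closed_field_poly_normal (char_poly (cmx M)).
exists rs; apply/eqP.
by rewrite {1}Hrs (monicP (char_poly_monic _)) scale1r.
Qed.

Definition eigvals k (M : 'M[R]_k) : seq R[i] := xchoose (char_poly_split M).

Definition specrad k (M : 'M[R]_k) : R :=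
  \big[Num.max/0]_(z <- eigvals M) Normc.normc z.

End Defs.

(* W12 and cW12 are nonnegative companion matrices [B C; I 0]. If v is a left
   eigenvector for an eigenvalue l of such a W, then u = |v| satisfies |l| u <= u W; writing
   u = (u1, u2), |l| >= 1 would give a nonzero u1 >= 0 with u1 <= u1 (B + C).
   For W12, B + C = P2^+ N, where (I - S2 P1^+) A = P2 - N is a proper splitting (its range
   contains R(P2) because I - S2 P1^+ is invertible). With X the Moore-Penrose inverse of
   (I - S2 P1^+) A this gives X = P2^+ + P2^+ N X, so the partial sums of
   sum_t (P2^+ N)^t P2^+ stay below X >= 0; then u1 <= u1 P2^+ N forces u1 P2^+ = 0, hence
   u1 = 0, and rho(W12) < 1.
   The comparison hypotheses say B <= B' and B' + C' <= B + C for the blocks B', C' of cW12.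
   An eigenvalue of cW12 of modulus r with rho(W12) < r < 1 would turn (u1, u1 C / r) into a
   nonnegative z with r z <= z W12, contradicting the Collatz-Wielandt bound r <= rho(W12).
   That bound comes from Cayley-Hamilton: if every eigenvalue of M has modulus below r, the
   partial sums of sum_t M^t / r^t are bounded. *)

From HB Require Import structures.
From mathcomp Require Import all_boot all_order all_algebra.
From mathcomp Require Import reals complex.
From mathcomp Require Import ring lra.
Import Order.TTheory GRing.Theory Num.Theory.
Local Open Scope ring_scope.

Set Implicit Arguments.
Unset Strict Implicit.
Unset Printing Implicit Defensive.

Section SpectralRadius.
Variable R : realType.
Local Notation normc := (@Normc.normc R).

Lemma normc_ge0 (z : R[i]) : 0 <= normc z.
Proof. by case: z => a b /=; rewrite sqrtr_ge0. Qed.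

Lemma normc_real (x : R) : normc (x%:C)%C = `|x|.
Proof. by rewrite /= expr0n /= addr0 sqrtr_sqr. Qed.

Lemma normc_sum (I : Type) (s : seq I) (F : I -> R[i]) :
  normc (\sum_(i <- s) F i) <= \sum_(i <- s) normc (F i).
Proof.
elim: s => [|a s IH]; first by rewrite !big_nil Normc.normc0.
by rewrite !big_cons (le_trans (le_normcD _ _)) ?lerD2l.
Qed.

Lemma cmxM m n p (A : 'M[R]_(m, n)) (B : 'M[R]_(n, p)) :
  cmx (A *m B) = cmx A *m cmx B.
Proof. exact: (map_mxM (real_complex R)). Qed.

Lemma cmxX k (M : 'M[R]_k) t : cmx (M ^+ t) = cmx M ^+ t.
Proof.
elim: t => [|t IH]; first by apply/matrixP => i j; rewrite !mxE; case: (i == j).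
by rewrite !exprS -!mulmxE cmxM IH.
Qed.

Lemma eigvalsE k (M : 'M[R]_k) :
  char_poly (cmx M) = \prod_(z <- eigvals M) ('X - z%:P).
Proof. exact/eqP/(xchooseP (char_poly_split M)). Qed.

Lemma mem_eigvals k (M : 'M[R]_k) z : (z \in eigvals M) = eigenvalue (cmx M) z.
Proof. by rewrite eigenvalue_root_char eigvalsE root_prod_XsubC. Qed.

Lemma specrad_ge0 k (M : 'M[R]_k) : 0 <= specrad M.
Proof. exact: bigmax_ge_id. Qed.

Lemma le_specrad k (M : 'M[R]_k) z : z \in eigvals M -> normc z <= specrad M.
Proof. by move=> Mz; apply: le_bigmax_seq. Qed.

Lemma specrad_le k (M : 'M[R]_k) c :
  0 <= c -> (forall z, z \in eigvals M -> normc z <= c) -> specrad M <= c.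
Proof. by move=> c0 Mc; rewrite /specrad big_seq bigmax_le. Qed.

Lemma specrad_lt k (M : 'M[R]_k) c :
  0 < c -> (forall z, z \in eigvals M -> normc z < c) -> specrad M < c.
Proof. by move=> c0 Mc; rewrite /specrad big_seq bigmax_lt. Qed.

Lemma unitmx_1B k (M : 'M[R]_k) : ~~ in_spectrum M 1 -> (1%:M - M) \in unitmx.
Proof.
rewrite /in_spectrum /cmx -(rmorph1 (real_complex R)).
change (fun x : R => (x%:C)%C) with (real_complex R : R -> R[i]).
rewrite eigenvalue_map negbK kermx_eq0 row_free_unit => unit_M1.
by rewrite -opprB -scaleN1r unitmxZ ?unitrN1.
Qed.

End SpectralRadius.

Section EntrywiseOrder.
Variable R : realType.

Lemma mx_lexx m n (A : 'M[R]_(m, n)) : mx_le A A.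
Proof. by move=> i j. Qed.

Lemma mx_le_trans m n (A B C : 'M[R]_(m, n)) : mx_le A B -> mx_le B C -> mx_le A C.
Proof. by move=> AB BC i j; apply: le_trans (AB i j) (BC i j). Qed.

Lemma mx_lerB2l m n (X Y Z : 'M[R]_(m, n)) : mx_le (X - Y) (X - Z) -> mx_le Z Y.
Proof. by move=> le_XYZ i j; have := le_XYZ i j; rewrite !mxE lerD2l lerN2. Qed.

Lemma mx_nonneg1 n : mx_nonneg (1%:M : 'M[R]_n).
Proof. by move=> i j; rewrite mxE ler0n. Qed.

Lemma mx_nonneg0 m n : mx_nonneg (0 : 'M[R]_(m, n)).
Proof. by move=> i j; rewrite mxE. Qed.

Lemma mx_nonnegD m n (A B : 'M[R]_(m, n)) :
  mx_nonneg A -> mx_nonneg B -> mx_nonneg (A + B).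
Proof. by move=> A0 B0 i j; rewrite mxE addr_ge0. Qed.

Lemma mx_nonnegN m n (A : 'M[R]_(m, n)) : mx_nonpos A -> mx_nonneg (- A).
Proof. by move=> A0 i j; rewrite mxE oppr_ge0. Qed.

Lemma mx_nonnegM m n p (A : 'M[R]_(m, n)) (B : 'M[R]_(n, p)) :
  mx_nonneg A -> mx_nonneg B -> mx_nonneg (A *m B).
Proof. by move=> A0 B0 i j; rewrite mxE sumr_ge0 // => k _; rewrite mulr_ge0. Qed.

Lemma mx_le_scale m n (a : R) (A B : 'M[R]_(m, n)) :
  0 <= a -> mx_le A B -> mx_le (a *: A) (a *: B).
Proof. by move=> a0 AB i j; rewrite !mxE ler_wpM2l. Qed.

Lemma mx_le_mul2l p m n (U : 'M[R]_(p, m)) (A B : 'M[R]_(m, n)) :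
  mx_nonneg U -> mx_le A B -> mx_le (U *m A) (U *m B).
Proof. by move=> U0 AB i j; rewrite !mxE ler_sum // => k _; rewrite ler_wpM2l. Qed.

Lemma mx_le_mul2r m n p (A B : 'M[R]_(m, n)) (M : 'M[R]_(n, p)) :
  mx_nonneg M -> mx_le A B -> mx_le (A *m M) (B *m M).
Proof. by move=> M0 AB i j; rewrite !mxE ler_sum // => k _; rewrite ler_wpM2r. Qed.

Lemma mx_le_row_mx m n1 n2 (A1 B1 : 'M[R]_(m, n1)) (A2 B2 : 'M[R]_(m, n2)) :
  mx_le (row_mx A1 A2) (row_mx B1 B2) <-> mx_le A1 B1 /\ mx_le A2 B2.
Proof.
split=> [le_A | [le1 le2] i j].
  by split=> i j; [have := le_A i (lshift _ j) | have := le_A i (rshift _ j)];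
    rewrite ?row_mxEl ?row_mxEr.
by rewrite -(splitK j); case: (split j) => k /=; rewrite ?row_mxEl ?row_mxEr.
Qed.

Lemma mx_nonneg_row_mx m n1 n2 (A1 : 'M[R]_(m, n1)) (A2 : 'M[R]_(m, n2)) :
  mx_nonneg (row_mx A1 A2) <-> mx_nonneg A1 /\ mx_nonneg A2.
Proof.
have le0E p q (A : 'M[R]_(p, q)) : mx_nonneg A <-> mx_le 0 A.
  by split=> A0 i j; have := A0 i j; rewrite mxE.
by rewrite !le0E -row_mx0 mx_le_row_mx.
Qed.

Lemma mx_nonneg_block m1 m2 n1 n2 (A : 'M[R]_(m1, n1)) (B : 'M[R]_(m1, n2))
    (C : 'M[R]_(m2, n1)) (D : 'M[R]_(m2, n2)) :
  mx_nonneg A -> mx_nonneg B -> mx_nonneg C -> mx_nonneg D ->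
  mx_nonneg (block_mx A B C D).
Proof.
move=> A0 B0 C0 D0 i j; rewrite -(splitK i) -(splitK j).
by case: (split i) => i'; case: (split j) => j' /=;
  rewrite ?block_mxEul ?block_mxEur ?block_mxEdl ?block_mxEdr.
Qed.

Lemma mulrn_bounded_le0 (p C : R) : (forall K, p *+ K <= C) -> p <= 0.
Proof.
move=> pC; rewrite leNgt; apply/negP => p0.
have C0 : 0 <= C / p by rewrite divr_ge0 ?(ltW p0) // -(mulr0n p).
have := archi_boundP C0; rewrite ltr_pdivrMr // mulr_natl.
by move/lt_le_trans/(_ (pC _)); rewrite ltxx.
Qed.

End EntrywiseOrder.

Section CollatzWielandt.
Variable R : realType.
Local Notation normc := (@Normc.normc R).

Lemma eigval_superinvariant k (M : 'M[R]_k) e :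
  mx_nonneg M -> e \in eigvals M ->
  exists u : 'rV[R]_k, [/\ mx_nonneg u, u != 0 & mx_le (normc e *: u) (u *m M)].
Proof.
move=> M0; rewrite mem_eigvals => /eigenvalueP[v ve nz_v].
exists (\row_j normc (v 0 j)); split.
- by move=> i j; rewrite mxE normc_ge0.
- apply: contra nz_v => /eqP/matrixP v0; apply/eqP/matrixP => i j.
  by have := v0 i j; rewrite (ord1 i) !mxE => /Normc.eq0_normc.
- move=> i j; move/matrixP: ve => /(_ 0 j); rewrite (ord1 i) !mxE => ve.
  rewrite -Normc.normcM -ve (le_trans (normc_sum _ _)) // ler_sum // => l _.
  by rewrite !mxE Normc.normcM normc_real ger0_norm.
Qed.

Definition rsummable (r : R) (a : nat -> R[i]) :=
  exists B, forall K, \sum_(t < K) normc (a t) / r ^+ t <= B.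

Lemma rsummable_rec (a b : nat -> R[i]) (z : R[i]) r :
  0 < r -> normc z < r -> (forall t, a t.+1 = z * a t + b t) ->
  rsummable r b -> rsummable r a.
Proof.
move=> r0 zr ab [Bb HBb]; set q := normc z / r.
have q1 : 0 < 1 - q by rewrite subr_gt0 ltr_pdivrMr // mul1r.
exists ((normc (a 0%N) + Bb / r) / (1 - q)) => K.
set S := \sum_(t < K) _.
have S_le : S <= \sum_(t < K.+1) normc (a t) / r ^+ t.
  by rewrite big_ord_recr /= lerDl divr_ge0 ?normc_ge0 ?exprn_ge0 ?ltW.
have step t : normc (a t.+1) / r ^+ t.+1 <=
              q * (normc (a t) / r ^+ t) + normc (b t) / r ^+ t / r.
  have rt : 0 < r ^+ t by rewrite exprn_gt0.
  have -> : q * (normc (a t) / r ^+ t) + normc (b t) / r ^+ t / r =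
            (normc z * normc (a t) + normc (b t)) / r ^+ t.+1.
    by rewrite /q exprSr; field; rewrite !gt_eqF.
  rewrite ab -Normc.normcM; apply: ler_wpM2r (le_normcD _ _).
  by rewrite invr_ge0 exprn_ge0 ?ltW.
have S_rec : \sum_(t < K.+1) normc (a t) / r ^+ t <= normc (a 0%N) + (q * S + Bb / r).
  rewrite big_ord_recl expr0 divr1 lerD2l; under eq_bigr => t _ do rewrite lift0.
  apply: le_trans; first by apply: ler_sum => t _; exact: step.
  by rewrite big_split /= -mulr_sumr -mulr_suml lerD2l ler_pM2r ?invr_gt0 ?HBb.
rewrite ler_pdivlMr //; nra.
Qed.

Lemma rsummable_annihilated k (M : 'M[R[i]]_k) r (rs : seq R[i]) :
  0 < r -> (forall z, z \in rs -> normc z < r) ->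
  forall Q : 'M[R[i]]_k, Q *m \prod_(z <- rs) (M - z%:M) = 0 ->
  forall i j, rsummable r (fun t => (Q *m M ^+ t) i j).
Proof.
move=> r0; elim: rs => [|z rs IH] rs_lt Q.
  rewrite big_nil mulmx1 => -> i j; exists 0 => K.
  by rewrite big1 // => t _; rewrite mul0mx mxE Normc.normc0 mul0r.
rewrite big_cons => Qz i j.
have {}Qz : Q *m (M - z%:M) *m \prod_(w <- rs) (M - w%:M) = 0 by rewrite -mulmxA.
have zr : normc z < r by apply: rs_lt; rewrite inE eqxx.
apply: (rsummable_rec (b := fun t => (Q *m (M - z%:M) *m M ^+ t) i j) r0 zr).
  move=> t; have -> : Q *m M ^+ t.+1 = z *: (Q *m M ^+ t) + Q *m (M - z%:M) *m M ^+ t.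
    rewrite exprS -mulmxE mulmxA mulmxBr mul_mx_scalar mulmxBl.
    by rewrite -scalemxAl addrC subrK.
  by rewrite [in LHS]mxE [X in X + _]mxE.
by apply: (IH _ _ Qz) => w rs_w; apply: rs_lt; rewrite inE rs_w orbT.
Qed.

Lemma rsummable_powers k (M : 'M[R]_k) r : 0 < r ->
  (forall z, z \in eigvals M -> normc z < r) ->
  forall i j, rsummable r (fun t => ((M ^+ t) i j)%:C%C).
Proof.
case: k M => [|k] M r0 eig_lt i j; first by case: i.
have CH : 1 *m \prod_(z <- eigvals M) (cmx M - z%:M) = 0.
  rewrite mul1mx -(Cayley_Hamilton (cmx M)) eigvalsE rmorph_prod.
  by apply: eq_bigr => z _; rewrite rmorphB /= horner_mx_X horner_mx_C.
have cmx_powE t : (1 *m cmx M ^+ t) i j = ((M ^+ t) i j)%:C%C.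
  by rewrite mul1mx -cmxX mxE.
have [B HB] := rsummable_annihilated r0 eig_lt CH i j.
by exists B => K; under eq_bigr => t _ do rewrite -cmx_powE; exact: HB.
Qed.

Lemma superinvariant_le_specrad k (M : 'M[R]_k) (z : 'rV[R]_k) r :
  mx_nonneg M -> mx_nonneg z -> z != 0 -> 0 < r -> mx_le (r *: z) (z *m M) ->
  r <= specrad M.
Proof.
move=> M0 z0 nz_z r0 zM; rewrite leNgt; apply/negP => lt_r.
(* [r ^+ t *: z <= z *m M ^+ t] makes [\sum_t M ^+ t / r ^+ t] grow linearly,
   while it stays bounded when every eigenvalue is smaller than [r]. *)
have eig_lt e : e \in eigvals M -> normc e < r.
  by move/le_specrad/le_lt_trans; apply.
have [j zj] : exists j, 0 < z 0 j.
  apply/existsP; apply: contraR nz_z => /existsPn z_le0; apply/eqP/matrixP => i j.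
  by rewrite (ord1 i) mxE; apply/le_anti; rewrite z0 andbT leNgt z_le0.
have [B HB] := fin_all_exists (fun i => rsummable_powers r0 eig_lt i j).
have zMt t : mx_le (r ^+ t *: z) (z *m M ^+ t).
  elim: t => [|t IH]; first by rewrite expr0 scale1r mulmx1; apply: mx_lexx.
  have -> : z *m M ^+ t.+1 = z *m M ^+ t *m M by rewrite exprSr mulmxA.
  rewrite exprSr -scalerA.
  apply: mx_le_trans (mx_le_scale (exprn_ge0 t (ltW r0)) zM) _.
  by rewrite scalemxAl; apply: mx_le_mul2r.
have zj_le t : z 0 j <= \sum_i z 0 i * (normc ((M ^+ t) i j)%:C%C / r ^+ t).
  have rt : 0 < r ^+ t by rewrite exprn_gt0.
  rewrite -(ler_pM2l rt) mulr_sumr; apply: le_trans (_ : (z *m M ^+ t) 0 j <= _).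
    by have := zMt t 0 j; rewrite mxE.
  rewrite mxE; apply: ler_sum => i _.
  rewrite mulrCA [r ^+ t * _]mulrCA mulfV ?gt_eqF // mulr1 normc_real.
  by apply: ler_wpM2l; [apply: z0 | apply: ler_norm].
have zj_bounded K : z 0 j *+ K <= \sum_i z 0 i * B i.
  have -> : z 0 j *+ K = \sum_(t < K) z 0 j by rewrite sumr_const card_ord.
  apply: le_trans (ler_sum _ (fun (t : 'I_K) _ => zj_le t)) _.
  rewrite exchange_big; apply: ler_sum => i _.
  by rewrite -mulr_sumr; apply: ler_wpM2l; [apply: z0 | apply: HB].
by move/mulrn_bounded_le0: zj_bounded; rewrite leNgt zj.
Qed.

End CollatzWielandt.

Section Superinvariant.
Variable R : realType.

(* For [T >= 0] this says [specrad T < 1]. *)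
Definition no_superinvariant n (T : 'M[R]_n) :=
  forall u : 'rV[R]_n, mx_nonneg u -> mx_le u (u *m T) -> u = 0.

Lemma no_superinvariant_le n (T T' : 'M[R]_n) :
  mx_le T' T -> no_superinvariant T -> no_superinvariant T'.
Proof.
move=> TT' hT u u0 uT'; apply: hT => //.
exact: mx_le_trans uT' (mx_le_mul2l u0 TT').
Qed.

Lemma no_superinvariant_pinv m n (Pd Md : 'M[R]_(n, m)) (N : 'M[R]_(m, n)) :
  mx_nonneg (Pd *m N) -> mx_nonneg Pd -> mx_nonneg Md ->
  Md = Pd + Pd *m N *m Md -> no_superinvariant (Pd *m N).
Proof.
move=> T0 Pd0 Md0 MdE u u0 uT; set T := Pd *m N in T0 MdE uT *.
have uTt t : mx_le u (u *m T ^+ t).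
  elim: t => [|t IH]; first by rewrite expr0 mulmx1; apply: mx_lexx.
  have -> : u *m T ^+ t.+1 = u *m T ^+ t *m T by rewrite exprSr mulmxA.
  exact: mx_le_trans uT (mx_le_mul2r T0 IH).
have neumann K : \sum_(t < K) T ^+ t *m Pd = Md - T ^+ K *m Md.
  elim: K => [|K IH]; first by rewrite big_ord0 expr0 mul1mx subrr.
  have PdE : Pd = Md - T *m Md by rewrite {1}MdE addrK.
  have TK : T ^+ K *m T = T ^+ K.+1 by rewrite exprSr.
  by rewrite big_ord_recr /= IH PdE mulmxBr mulmxA TK addrA subrK.
have uPd0 : u *m Pd = 0.
  apply/matrixP => i j; rewrite (ord1 i) [RHS]mxE; apply/le_anti.
  rewrite (mx_nonnegM u0 Pd0) andbT.
  apply: (@mulrn_bounded_le0 _ _ ((u *m Md) 0 j)) => K.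
  have -> : (u *m Pd) 0 j *+ K = \sum_(t < K) (u *m Pd) 0 j by rewrite sumr_const card_ord.
  apply: le_trans (_ : (u *m \sum_(t < K) T ^+ t *m Pd) 0 j <= _).
    rewrite mulmx_sumr summxE; apply: ler_sum => t _.
    by rewrite mulmxA; apply: mx_le_mul2r Pd0 (uTt t) 0 j.
  rewrite neumann mulmxBr mxE [X in _ + X]mxE lerBlDr lerDl mulmxA.
  exact: mx_nonnegM (fun i l => le_trans (u0 i l) (uTt K i l)) Md0 0 j.
apply/matrixP => i j; apply/le_anti; rewrite mxE u0 andbT.
by have := uT i j; rewrite /T mulmxA uPd0 mul0mx mxE.
Qed.

End Superinvariant.

Section Companion.
Variable R : realType.
Local Notation normc := (@Normc.normc R).

Definition companion n (B C : 'M[R]_n) : 'M[R]_(n + n) := block_mx B C 1%:M 0.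

Lemma mx_nonneg_companion n (B C : 'M[R]_n) :
  mx_nonneg B -> mx_nonneg C -> mx_nonneg (companion B C).
Proof.
by move=> B0 C0; apply: mx_nonneg_block => //; [apply: mx_nonneg1 | apply: mx_nonneg0].
Qed.

Lemma companion_superinvariant n (B C : 'M[R]_n) (u1 u2 : 'rV[R]_n) r :
  0 < r -> mx_nonneg (row_mx u1 u2) -> row_mx u1 u2 != 0 ->
  mx_le (r *: row_mx u1 u2) (row_mx u1 u2 *m companion B C) ->
  [/\ mx_nonneg u1, mx_nonneg u2, u1 != 0,
      mx_le (r *: u1) (u1 *m B + u2) & mx_le (r *: u2) (u1 *m C)].
Proof.
move=> r0 /mx_nonneg_row_mx[u10 u20] nz_u.
rewrite scale_row_mx mul_row_block mulmx1 mulmx0 addr0 => /mx_le_row_mx[le1 le2].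
split=> //; apply: contra nz_u => /eqP u1_0; apply/eqP.
suff -> : u2 = 0 by rewrite u1_0 row_mx0.
apply/matrixP => i j; apply/le_anti; rewrite mxE u20 andbT.
by have := le2 i j; rewrite u1_0 mul0mx !mxE pmulr_rle0.
Qed.

Lemma companion_superinvariant_lt1 n (B C : 'M[R]_n) (u : 'rV[R]_(n + n)) r :
  no_superinvariant (B + C) -> mx_nonneg u -> u != 0 ->
  mx_le (r *: u) (u *m companion B C) -> r < 1.
Proof.
move=> BC1 u0 nz_u ru; rewrite ltNge; apply/negP => r1.
move: u0 nz_u ru; rewrite -(hsubmxK u) => u0 nz_u ru.
have [u10 u20 nz_u1 le1 le2] :=
  companion_superinvariant (lt_le_trans ltr01 r1) u0 nz_u ru.
apply/(negP nz_u1)/eqP/BC1 => //; rewrite mulmxDr.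
move: (lsubmx u *m B) (lsubmx u *m C) le1 le2 => b c le1 le2 i j.
have := le1 i j; have := le2 i j; have := u10 i j; have := u20 i j.
rewrite !mxE; nra.
Qed.

Lemma companion_specrad_lt1 n (B C : 'M[R]_n) :
  mx_nonneg B -> mx_nonneg C -> no_superinvariant (B + C) ->
  specrad (companion B C) < 1.
Proof.
move=> B0 C0 BC1; apply: specrad_lt => // e e_eig.
have [u [u0 nz_u ue]] := eigval_superinvariant (mx_nonneg_companion B0 C0) e_eig.
exact: companion_superinvariant_lt1 BC1 u0 nz_u ue.
Qed.

Lemma companion_superinvariant_transfer n (B C B' C' : 'M[R]_n) (u1 u2 : 'rV[R]_n) r :
  0 < r -> r < 1 -> mx_nonneg u1 -> mx_le B B' -> mx_le (B' + C') (B + C) ->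
  mx_le (r *: u1) (u1 *m B' + u2) -> mx_le (r *: u2) (u1 *m C') ->
  let z := row_mx u1 (r^-1 *: (u1 *m C)) in mx_le (r *: z) (z *m companion B C).
Proof.
move=> r0 r1 u10 BB' SS' le1 le2 z.
rewrite scale_row_mx mul_row_block mulmx1 mulmx0 addr0 scalerA mulfV ?gt_eqF //.
rewrite scale1r; apply/mx_le_row_mx; split; last exact: mx_lexx.
have le_B := mx_le_mul2l u10 BB'; have le_S := mx_le_mul2l u10 SS'.
rewrite !mulmxDr in le_S.
move: (u1 *m B) (u1 *m C) (u1 *m B') (u1 *m C') le1 le2 le_B le_S.
move=> b c b' c' le1 le2 le_B le_S i j.
have := le1 i j; have := le2 i j; have := le_B i j; have := le_S i j.
rewrite !mxE => hS hB h2 h1.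
have r'0 : 0 <= 1 - r by rewrite subr_ge0 ltW.
have := ler_wpM2l (ltW r0) h1; have := ler_wpM2l r'0 hB => p2 p1.
rewrite -(ler_pM2l r0) mulrDr [r * (r^-1 * _)]mulrA mulfV ?gt_eqF // mul1r; lra.
Qed.

Lemma companion_specrad_le n (B C B' C' : 'M[R]_n) :
  mx_nonneg B -> mx_nonneg C -> mx_nonneg B' -> mx_nonneg C' ->
  no_superinvariant (B + C) -> mx_le B B' -> mx_le (B' + C') (B + C) ->
  specrad (companion B' C') <= specrad (companion B C).
Proof.
move=> B0 C0 B'0 C'0 BC1 BB' SS'.
apply: specrad_le (specrad_ge0 _) _ => e e_eig; set r := normc e.
rewrite leNgt; apply/negP => lt_r.
have r0 : 0 < r := le_lt_trans (specrad_ge0 _) lt_r.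
have [u [u0 nz_u ue]] := eigval_superinvariant (mx_nonneg_companion B'0 C'0) e_eig.
have r1 := companion_superinvariant_lt1 (no_superinvariant_le SS' BC1) u0 nz_u ue.
move: u0 nz_u ue; rewrite -(hsubmxK u); set u1 := lsubmx u; set u2 := rsubmx u.
move=> u0 nz_u ue; have [u10 _ nz_u1 le1 le2] := companion_superinvariant r0 u0 nz_u ue.
have zW := companion_superinvariant_transfer r0 r1 u10 BB' SS' le1 le2.
have z0 : mx_nonneg (row_mx u1 (r^-1 *: (u1 *m C))).
  apply/mx_nonneg_row_mx; split=> // i j.
  by rewrite mxE mulr_ge0 ?invr_ge0 ?(ltW r0) ?(mx_nonnegM u10 C0).
have nz_z : row_mx u1 (r^-1 *: (u1 *m C)) != 0.
  apply: contra nz_u1 => /eqP/matrixP z_0; apply/eqP/matrixP => i j.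
  by have := z_0 i (lshift _ j); rewrite row_mxEl !mxE.
have := superinvariant_le_specrad (mx_nonneg_companion B0 C0) z0 nz_z r0 zW.
by rewrite leNgt lt_r.
Qed.

End Companion.

Section MoorePenrose.
Variable R : realType.

Lemma mx_eq_col m n (M N : 'M[R]_(m, n)) :
  (forall x : 'cV[R]_n, M *m x = N *m x) -> M = N.
Proof.
move=> MN; apply/matrixP => i j.
by have /matrixP/(_ i 0) := MN (delta_mx j 0); rewrite -!colE !mxE.
Qed.

Lemma mulmx_pinv_null m n p (P : 'M[R]_(m, n)) Pd (Q : 'M[R]_(p, n)) :
  is_MP P Pd -> (forall x, in_null P x -> in_null Q x) -> Q *m Pd *m P = Q.
Proof.
case=> PPdP _ _ _ PQ; apply: mx_eq_col => x.
have /PQ : in_null P (x - Pd *m P *m x) by rewrite /in_null mulmxBr !mulmxA PPdP subrr.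
by rewrite /in_null mulmxBr !mulmxA => /eqP; rewrite subr_eq0 => /eqP.
Qed.

Lemma mulmx_pinv_range m n p (M : 'M[R]_(m, n)) Md (P : 'M[R]_(m, p)) :
  is_MP M Md -> (forall x, in_range M (P *m x)) -> M *m Md *m P = P.
Proof.
case=> MMdM _ _ _ MP; apply: mx_eq_col => x.
by have [w Pw] := MP x; rewrite -mulmxA Pw mulmxA MMdM.
Qed.

Lemma pinv_proper_splitting m n (M P N : 'M[R]_(m, n)) Md Pd :
  is_MP M Md -> is_MP P Pd -> M = P - N ->
  (forall x, in_range M (P *m x)) -> (forall x, in_null P x -> in_null M x) ->
  Md = Pd + Pd *m N *m Md.
Proof.
move=> hM hP defM rangeP nullP.
have MMdP := mulmx_pinv_range hM rangeP.
have MPdP := mulmx_pinv_null hP nullP.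
case: hM hP => _ MdMMd MMd_sym MdM_sym [_ PdPPd PPd_sym PdP_sym].
have PdMMd : Pd *m M *m Md = Pd.
  have PtE : P^T = P^T *m (M *m Md) by rewrite -{1}MMdP trmx_mul MMd_sym.
  apply/esym; rewrite -{1}PdPPd -mulmxA -PPd_sym trmx_mul PtE (mulmxA Pd^T).
  by rewrite -trmx_mul PPd_sym !mulmxA PdPPd.
have PdPMd : Pd *m P *m Md = Md.
  rewrite -MdMMd -MdM_sym trmx_mul !mulmxA.
  suff -> : Pd *m P *m M^T = M^T by [].
  by rewrite -PdP_sym -trmx_mul mulmxA MPdP.
have -> : N = P - M by rewrite defM opprB addrC subrK.
by rewrite mulmxBr mulmxBl PdPMd PdMMd addrC subrK.
Qed.

Lemma range_mulmx_1B m n (A : 'M[R]_(m, n)) (K : 'M[R]_m) :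
  (1%:M - K) \in unitmx -> (forall y, in_range A (K *m y)) ->
  forall y, in_range A y -> in_range ((1%:M - K) *m A) y.
Proof.
move=> unitK rangeK y [x ->]; set w := invmx (1%:M - K) *m (A *m x).
have Kw : (1%:M - K) *m w = A *m x by rewrite mulKVmx.
have wE : w = A *m x + K *m w by rewrite -Kw mulmxBl mul1mx subrK.
have [z Kw_z] := rangeK w.
by exists (x + z); rewrite -mulmxA mulmxDr -Kw_z -wE Kw.
Qed.

End MoorePenrose.

Section DoubleSplittings.
Variables (R : realType) (m n : nat).
Variables (A P1 R1 S1 P2 R2 S2 : 'M[R]_(m, n)) (P1d P2d Ahd : 'M[R]_(n, m)).
Hypotheses (hspl1 : A = P1 - R1 + S1) (hP1n : same_null P1 A) (hP1d : is_MP P1 P1d).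
Hypotheses (hP1R1 : mx_nonneg (P1d *m R1)) (hP1S1 : mx_nonpos (P1d *m S1)).
Hypotheses (hspl2 : A = P2 - R2 + S2) (hP2r : same_range P2 A) (hP2n : same_null P2 A).
Hypotheses (hP2d : is_MP P2 P2d) (hP2d0 : mx_nonneg P2d).
Hypotheses (hR2 : mx_nonneg R2) (hS2 : mx_nonpos S2).
Hypotheses (hS2n : same_null S2 P2) (hS2r : same_range S2 P2).
Hypotheses (hsig1 : ~~ in_spectrum (S2 *m P1d) 1).
Hypotheses (hAhd : is_MP ((1%:M - S2 *m P1d) *m A) Ahd) (hAhd0 : mx_nonneg Ahd).

Local Notation Ah := ((1%:M - S2 *m P1d) *m A).
Local Notation Ac := ((1%:M + R2 *m P1d) *m A).
Local Notation Nh := (R2 - S2 *m P1d *m R1 + S2 *m P1d *m S1).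
Local Notation Nc := (R2 *m P1d *m R1 - S2 - R2 *m P1d *m S1).
Local Notation Bh := (P2d *m R2 - P2d *m S2 *m P1d *m R1).
Local Notation Ch := (P2d *m S2 *m P1d *m S1).
Local Notation Bc := (P2d *m R2 *m P1d *m R1 - P2d *m S2).
Local Notation Cc := (- (P2d *m R2 *m P1d *m S1)).

Lemma in_null_P1 x : in_null P1 x -> [/\ in_null A x, in_null P2 x & in_null S2 x].
Proof. by move=> /hP1n/[dup] /hP2n/[dup] /hS2n. Qed.

Lemma S2_pinv_P1 : S2 *m P1d *m P1 = S2.
Proof. by apply: mulmx_pinv_null hP1d _ => x /in_null_P1[]. Qed.

Lemma R2_pinv_P1 : R2 *m P1d *m P1 = R2.
Proof.
apply: mulmx_pinv_null hP1d _ => x /in_null_P1[Ax P2x S2x].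
have -> : R2 = P2 + S2 - A by apply/matrixP => i j; rewrite hspl2 !mxE; ring.
by rewrite /in_null mulmxBl mulmxDl P2x S2x Ax addr0 subr0.
Qed.

Lemma hatA_split : Ah = P2 - Nh.
Proof.
rewrite mulmxBl mul1mx {2}hspl1 mulmxDr mulmxBr S2_pinv_P1 {1}hspl2.
by apply/matrixP => i j; rewrite !mxE; ring.
Qed.

Lemma calA_split : Ac = P2 - Nc.
Proof.
rewrite mulmxDl mul1mx {2}hspl1 mulmxDr mulmxBr R2_pinv_P1 {1}hspl2.
by apply/matrixP => i j; rewrite !mxE; ring.
Qed.

Lemma W12_blocks_nonneg :
  [/\ mx_nonneg Bh, mx_nonneg Ch, mx_nonneg Bc & mx_nonneg Cc].
Proof.
have mS2 := mx_nonnegN hS2; have mP1S1 := mx_nonnegN hP1S1.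
split.
- have -> : Bh = P2d *m R2 + P2d *m (- S2) *m (P1d *m R1).
    by rewrite mulmxN mulNmx !mulmxA.
  by apply: mx_nonnegD; apply: mx_nonnegM => //; apply: mx_nonnegM.
- have -> : Ch = P2d *m (- S2) *m (- (P1d *m S1)).
    by rewrite !mulmxN mulNmx opprK !mulmxA.
  by apply: mx_nonnegM => //; apply: mx_nonnegM.
- have -> : Bc = P2d *m R2 *m (P1d *m R1) + P2d *m (- S2).
    by rewrite mulmxN !mulmxA.
  by apply: mx_nonnegD; apply: mx_nonnegM => //; apply: mx_nonnegM.
- have -> : Cc = P2d *m R2 *m (- (P1d *m S1)) by rewrite mulmxN !mulmxA.
  by apply: mx_nonnegM => //; apply: mx_nonnegM.
Qed.

Lemma W12_sum_blocks : Bh + Ch = P2d *m Nh.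
Proof. by rewrite mulmxDr mulmxBr !mulmxA. Qed.

Lemma W12_sum_blocks_le :
  mx_le (P2d *m Ah) (P2d *m Ac) -> mx_le (Bc + Cc) (Bh + Ch).
Proof.
rewrite hatA_split calA_split !mulmxBr => /mx_lerB2l.
by rewrite !mulmxDr !mulmxN !mulmxA.
Qed.

Lemma W12_block_le :
  mx_le (P2d *m (R2 - S2 *m P1d *m R1)) (P2d *m (R2 *m P1d *m R1 - S2)) ->
  mx_le Bh Bc.
Proof. by rewrite !mulmxBr !mulmxA. Qed.

Lemma W12_no_superinvariant : no_superinvariant (Bh + Ch).
Proof.
have [Bh0 Ch0 _ _] := W12_blocks_nonneg.
have rangeP2 x : in_range Ah (P2 *m x).
  apply: range_mulmx_1B (unitmx_1B hsig1) _ _ _; last by apply/hP2r; exists x.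
  by move=> y; apply/hP2r/hS2r; exists (P1d *m y); rewrite mulmxA.
have nullP2 x : in_null P2 x -> in_null Ah x.
  by move/hP2n; rewrite /in_null -mulmxA => ->; rewrite mulmx0.
have AhdE := pinv_proper_splitting hAhd hP2d hatA_split rangeP2 nullP2.
rewrite W12_sum_blocks; apply: no_superinvariant_pinv hP2d0 hAhd0 AhdE.
by rewrite -W12_sum_blocks; apply: mx_nonnegD.
Qed.

End DoubleSplittings.

Theorem theorem3p19 (R : realType) (m n : nat)
  (A P1 R1 S1 P2 R2 S2 : 'M[R]_(m, n))
  (Ad P1d P2d Ahd Acd : 'M[R]_(n, m))
  (* A is semi-monotone *)
  (hAd : is_MP A Ad) (hAmono : mx_nonneg Ad)
  (* A = P1 - R1 + S1 is a double proper weak regular splitting *)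
  (hspl1 : A = P1 - R1 + S1)
  (hP1r : same_range P1 A) (hP1n : same_null P1 A)
  (hP1d : is_MP P1 P1d) (hP1d0 : mx_nonneg P1d)
  (hP1R1 : mx_nonneg (P1d *m R1)) (hP1S1 : mx_nonpos (P1d *m S1))
  (* A = P2 - R2 + S2 is a double proper regular splitting *)
  (hspl2 : A = P2 - R2 + S2)
  (hP2r : same_range P2 A) (hP2n : same_null P2 A)
  (hP2d : is_MP P2 P2d) (hP2d0 : mx_nonneg P2d)
  (hR2 : mx_nonneg R2) (hS2 : mx_nonpos S2)
  (* N(S2) = N(P2), R(S2) = R(P2) *)
  (hS2n : same_null S2 P2) (hS2r : same_range S2 P2)
  (* 1 not in sigma(S2 P1^+), -1 not in sigma(R2 P1^+) *)
  (hsig1 : ~~ in_spectrum (S2 *m P1d) 1)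
  (hsig2 : ~~ in_spectrum (R2 *m P1d) (-1))
  (* hat A = (I - S2 P1^+) A, cal A = (I + R2 P1^+) A, both semi-monotone *)
  (hAhd : is_MP ((1%:M - S2 *m P1d) *m A) Ahd) (hAhd0 : mx_nonneg Ahd)
  (hAcd : is_MP ((1%:M + R2 *m P1d) *m A) Acd) (hAcd0 : mx_nonneg Acd)
  (* hat P = cal P = P2, hat R = R2 - S2 P1^+ R1, cal R = R2 P1^+ R1 - S2 *)
  (hcmpR : mx_le (P2d *m (R2 - S2 *m P1d *m R1))
                 (P2d *m (R2 *m P1d *m R1 - S2)))
  (hcmpA : mx_le (P2d *m ((1%:M - S2 *m P1d) *m A))
                 (P2d *m ((1%:M + R2 *m P1d) *m A))) :
  let W12 : 'M[R]_(n + n) :=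
    block_mx (P2d *m R2 - P2d *m S2 *m P1d *m R1) (P2d *m S2 *m P1d *m S1)
             1%:M 0 in
  let cW12 : 'M[R]_(n + n) :=
    block_mx (P2d *m R2 *m P1d *m R1 - P2d *m S2) (- (P2d *m R2 *m P1d *m S1))
             1%:M 0 in
  specrad cW12 <= specrad W12 < 1.
Proof.
cbv zeta.
have [Bh0 Ch0 Bc0 Cc0] := W12_blocks_nonneg hP1R1 hP1S1 hP2d0 hR2 hS2.
have BC1 := W12_no_superinvariant hspl1 hP1n hP1d hP1R1 hP1S1 hspl2 hP2r hP2n
  hP2d hP2d0 hR2 hS2 hS2n hS2r hsig1 hAhd hAhd0.
apply/andP; split.
- exact: companion_specrad_le Bh0 Ch0 Bc0 Cc0 BC1
    (W12_block_le hcmpR) (W12_sum_blocks_le hspl1 hP1n hP1d hspl2 hP2n hS2n hcmpA).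
- exact: companion_specrad_lt1 Bh0 Ch0 BC1.
Qed.
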